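(* Let $V$ be a real vector space and $X$ a set of points lying on a line $\ell$ of $V$. The following are equivalent: (i) $Co(V,X)$ is topologically scattered (as a subspace of $\mathbf{2}^X$ with the product topology); (ii) $Co(V,X)$ is order-scattered; (iii) the semilattice of compact elements of $Co(V,X)$ is order-scattered; (iv) $X$ is order-scattered with respect to the linear order induced on $\ell$ (by identifying $\ell$ with the real line).
   Context: $Co(V,X)$ is the family of sets $C\cap X$ with $C$ convex in $V$, ordered by inclusion; its compact elements are the sets $\mathrm{conv}(F)\cap X$ with $F\subseteq X$ finite. A poset is order-scattered if it contains no copy of the chain $\mathbb{Q}$. A topological space is scattered if every non-empty subset has an isolated point in the induced topology; $\mathbf{2}^X\cong\mathcal{P}(X)$ carries the product topology of discrete two-point spaces. *)

From HB Require Import structures.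
From mathcomp Require Import all_boot all_order all_algebra.
From mathcomp Require Import boolp classical_sets cardinality reals.
Set Implicit Arguments. Unset Strict Implicit. Unset Printing Implicit Defensive.
Import Order.TTheory GRing.Theory Num.Theory.
Local Open Scope classical_set_scope.
Local Open Scope ring_scope.

Section Defs.
Variable R : realType.
Variable V : lmodType R.

Definition convex_in (C : set V) : Prop :=
  forall x y, C x -> C y -> forall t : R, 0 <= t -> t <= 1 ->
    C (t *: x + (1 - t) *: y).

Definition conv (F : set V) : set V :=
  [set x | forall C, convex_in C -> F `<=` C -> C x].

Definition Co (X : set V) : set (set V) :=
  [set S | exists C, convex_in C /\ S = C `&` X].

(* compact elements of Co(V,X): conv(F) ∩ X, F ⊆ X finite *)
Definition Co_compact (X : set V) : set (set V) :=
  [set S | exists F, F `<=` X /\ finite_set F /\ S = conv F `&` X].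

(* S is an isolated point of the family G, viewed as a subspace of 2^X
   with the product topology: some basic open set
   { T | A ⊆ T, B ∩ T = ∅ } (A ⊆ X, B ⊆ X finite) meets G only in S. *)
Definition isolated_point (X : set V) (G : set (set V)) (S : set V) : Prop :=
  G S /\ exists A B : set V,
    [/\ finite_set A, finite_set B, A `<=` X, B `<=` X &
    [/\ A `<=` S, B `&` S = set0 &
      forall T, G T -> A `<=` T -> B `&` T = set0 -> T = S]].

Definition top_scattered (X : set V) (F : set (set V)) : Prop :=
  forall G, G `<=` F -> G !=set0 -> exists S, isolated_point X G S.
End Defs.

Definition order_scattered (T : Type) (lt : T -> T -> Prop) (P : set T) : Prop :=
  ~ exists f : rat -> T, (forall q, P (f q)) /\
      (forall q r : rat, q < r -> lt (f q) (f r)).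

Definition proper_subset (T : Type) (A B : set T) : Prop :=
  A `<=` B /\ A <> B.

(* Parametrising the line by t |-> a + t d identifies X with the chain
   Y = {t | a + t d \in X} of reals, and each member of Co(V,X) with an
   order-convex subset of Y.
   If f embeds Q into Y, the compact sets conv{f 0, f (e q)} /\ X (e an
   embedding of Q into (0,1)) form a Q-chain, and the sets of points below
   some f s with s < q form a subfamily of Co(V,X) without isolated points.
   Conversely, from a Q-chain P of convex sets pick w q in P (B q) \ P (A q)
   along pairwise separated intervals (A q, B q); a colouring argument keeps a
   copy of Q on which all w q lie on the same side of a common point t0, and
   convexity then makes w monotone there.
   Finally, in a subfamily of Co(V,X) without isolated points, the members
   through a point t0 are determined by their two cuts (the points of Y
   missing on either side of t0). One of the two cut maps is nowhere locally
   constant on some open piece, so its image is a chain of down-sets of Y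
   without isolated points; splitting such a chain along a binary tree gives a
   dense subset of Y without end points, which contains Q by Cantor's theorem. *)

From HB Require Import structures.
From mathcomp Require Import all_boot all_order all_algebra.
From mathcomp Require Import boolp classical_sets cardinality reals.
From mathcomp Require Import ring lra.
Import Order.TTheory GRing.Theory Num.Theory.
Local Open Scope classical_set_scope.
Local Open Scope ring_scope.
Set Implicit Arguments.
Unset Strict Implicit.

Definition embeds_rat (T : Type) (lt : T -> T -> Prop) (P : set T) : Prop :=
  exists f : rat -> T, (forall q, P (f q)) /\ (forall q r, q < r -> lt (f q) (f r)).

Lemma embeds_ratS (T : Type) (lt : T -> T -> Prop) (P Q : set T) :
  P `<=` Q -> embeds_rat lt P -> embeds_rat lt Q.
Proof. by move=> PQ [f [Pf mf]]; exists f; split=> // q; apply: PQ. Qed.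

Lemma embeds_rat_flip (T : Type) (lt : T -> T -> Prop) (P : set T) :
  embeds_rat (fun x y => lt y x) P -> embeds_rat lt P.
Proof.
by move=> [f [Pf mf]]; exists (fun q => f (- q)); split=> // q r qr; apply: mf; rewrite ltrN2.
Qed.

Section DenseOrder.
Variables (T : Type) (lt : T -> T -> Prop) (D : set T).
Hypothesis ltT : forall x y z, lt x y -> lt y z -> lt x z.
Hypothesis D0 : D !=set0.
Hypothesis D_no_min : forall x, D x -> exists2 y, D y & lt y x.
Hypothesis D_no_max : forall x, D x -> exists2 y, D y & lt x y.
Hypothesis D_dense : forall x y, D x -> D y -> lt x y ->
  exists z, [/\ D z, lt x z & lt z y].

Local Notation enumerated n q := (@pickle rat q < n)%N.

Lemma enumerated_argmax n (P : pred rat) (F : rat -> rat) :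
  (exists2 q, enumerated n q & P q) ->
  exists m, [/\ enumerated n m, P m & forall q, enumerated n q -> P q -> F q <= F m].
Proof.
move=> [q0 q0n Pq0].
pose Pi (i : 'I_n) := if @pickle_inv rat i is Some q then P q else false.
pose Fi (i : 'I_n) := F (odflt 0 (@pickle_inv rat i)).
have Pi0 : Pi (Ordinal q0n).
  by rewrite /Pi (pickleK_inv q0 : @pickle_inv rat (Ordinal q0n) = _).
case: (arg_maxP Fi Pi0) => i; rewrite /Pi /Fi.
case Ei: (@pickle_inv rat i) => [m|//] Pm maxm.
have pm : pickle m = i by have := @pickle_invK rat i; rewrite Ei.
exists m; split; rewrite ?pm //.
move=> q qn Pq; have := maxm (Ordinal qn).
by rewrite (pickleK_inv q : @pickle_inv rat (Ordinal qn) = _); apply.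
Qed.

Definition partial_embedding n (g : nat -> T) :=
  (forall q : rat, enumerated n q -> D (g (pickle q))) /\
  (forall q r : rat, enumerated n q -> enumerated n r -> q < r ->
     lt (g (pickle q)) (g (pickle r))).

Lemma partial_embedding_extend n g (r : rat) : partial_embedding n g ->
  exists2 x, D x & forall q, enumerated n q ->
    (q < r -> lt (g (pickle q)) x) /\ (r < q -> lt x (g (pickle q))).
Proof.
move=> [Dg mg].
pose below x := forall q, enumerated n q -> q < r -> lt (g (pickle q)) x.
pose above x := forall q, enumerated n q -> r < q -> lt x (g (pickle q)).
have below_max q1 : enumerated n q1 -> q1 < r -> exists m,
    [/\ enumerated n m, m < r & forall x, lt (g (pickle m)) x -> below x].
  move=> q1n q1r; have [m [mn mr maxm]] :=
    @enumerated_argmax n (fun q => q < r) id (ex_intro2 _ _ q1 q1n q1r).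
  exists m; split=> // x mx q qn qr; have := maxm q qn qr; rewrite le_eqVlt.
  by case/orP=> [/eqP->//|qm]; apply: ltT (mg _ _ qn mn qm) mx.
have above_min q2 : enumerated n q2 -> r < q2 -> exists M,
    [/\ enumerated n M, r < M & forall x, lt x (g (pickle M)) -> above x].
  move=> q2n rq2; have [M [Mn rM minM]] :=
    @enumerated_argmax n (fun q => r < q) -%R (ex_intro2 _ _ q2 q2n rq2).
  exists M; split=> // x xM q qn rq; have := minM q qn rq; rewrite lerN2 le_eqVlt.
  by case/orP=> [/eqP<-//|Mq]; apply: ltT xM (mg _ _ Mn qn Mq).
suff [x Dx [bx ax]] : exists2 x, D x & below x /\ above x.
  by exists x => // q qn; split; [apply: bx|apply: ax].
have [[q1 q1n q1r]|nlo] := pselect (exists2 q, enumerated n q & q < r);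
have [[q2 q2n rq2]|nhi] := pselect (exists2 q, enumerated n q & r < q).
- have [[m [mn mr mb]] [M [Mn rM Ma]]] := (below_max q1 q1n q1r, above_min q2 q2n rq2).
  have [x [Dx mx xM]] := D_dense (Dg m mn) (Dg M Mn) (mg _ _ mn Mn (lt_trans mr rM)).
  by exists x => //; split; [apply: mb|apply: Ma].
- have [m [mn _ mb]] := below_max q1 q1n q1r; have [x Dx mx] := D_no_max (Dg m mn).
  by exists x => //; split=> [|q qn rq]; [apply: mb|case: nhi; exists q].
- have [M [Mn _ Ma]] := above_min q2 q2n rq2; have [x Dx xM] := D_no_min (Dg M Mn).
  by exists x => //; split=> [q qn qr|]; [case: nlo; exists q|apply: Ma].
- have [x Dx] := D0; exists x => //.
  by split=> q qn qr; [case: nlo|case: nhi]; exists q.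
Qed.

Lemma exists_extension n g (r : rat) : exists x, partial_embedding n g ->
  D x /\ forall q, enumerated n q ->
    (q < r -> lt (g (pickle q)) x) /\ (r < q -> lt x (g (pickle q))).
Proof.
have [pe|npe] := pselect (partial_embedding n g); last first.
  by have [x _] := D0; exists x => /npe.
by have [x Dx xP] := partial_embedding_extend r pe; exists x.
Qed.

Let extension n g r := sval (cid (exists_extension n g r)).

(* Cantor's forth construction along the enumeration [pickle] of rat:
   [stage n] embeds the rationals of index below n. *)
Fixpoint stage n : nat -> T :=
  if n is m.+1 then fun i =>
    if i == m then extension m (stage m) (odflt 0 (@pickle_inv rat m)) else stage m i
  else fun=> sval (cid D0).

Lemma stage_partial_embedding n : partial_embedding n (stage n).
Proof.
elim: n => [|n [Dg mg]]; first by split.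
have [Dx xP] := svalP (cid (exists_extension n (stage n)
  (odflt 0 (@pickle_inv rat n)))) (conj Dg mg).
have pinv q : pickle q = n -> @pickle_inv rat n = Some q by move<-; apply: pickleK_inv.
have new q : pickle q = n -> stage n.+1 (pickle q) = extension n (stage n) q.
  by move=> qn; rewrite /= qn eqxx (pinv q qn).
have old q : enumerated n q -> stage n.+1 (pickle q) = stage n (pickle q).
  by move=> qn; rewrite /= (ltn_eqF qn).
split=> [q|q r]; rewrite ltnS leq_eqVlt => /orP[/eqP qn|qn].
- by rewrite new //; move: Dx; rewrite (pinv q qn).
- by rewrite old //; apply: Dg.
- rewrite ltnS leq_eqVlt => /orP[/eqP rn|rn] qr.
    by move: qr; rewrite (pcan_inj (@pickleK_inv rat) (etrans qn (esym rn))) ltxx.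
  rewrite (new q) // (old r) //; move: xP; rewrite (pinv q qn) => xP.
  exact: (xP r rn).2 qr.
- rewrite ltnS leq_eqVlt => /orP[/eqP rn|rn] qr; last by rewrite !old //; apply: mg.
  rewrite (new r) // (old q) //; move: xP; rewrite (pinv r rn) => xP.
  exact: (xP q qn).1 qr.
Qed.

Lemma stage_stable n i : (i < n)%N -> stage n i = stage i.+1 i.
Proof.
elim: n => [//|n IH]; rewrite ltnS leq_eqVlt => /orP[/eqP->//|lti].
by rewrite [in LHS]/= (ltn_eqF lti) IH.
Qed.

Theorem dense_embeds_rat : embeds_rat lt D.
Proof.
exists (fun q => stage (pickle q).+1 (pickle q)); split.
  by move=> q; apply: (stage_partial_embedding _).1.
move=> q r qr; set n := (maxn (pickle q) (pickle r)).+1.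
have qn : (pickle q < n)%N by rewrite ltnS leq_maxl.
have rn : (pickle r < n)%N by rewrite ltnS leq_maxr.
by rewrite -(stage_stable qn) -(stage_stable rn); apply: (stage_partial_embedding n).2.
Qed.
End DenseOrder.

Section SplittingTree.
Variables (T : Type) (lt : T -> T -> Prop) (N : set (set T)).
Hypothesis ltT : forall x y z, lt x y -> lt y z -> lt x z.
Hypothesis lt_irr : forall x, ~ lt x x.
Hypothesis N0 : N !=set0.
Hypothesis N_split : forall M, N M -> exists p M1 M2,
  [/\ M p, N M1, N M2, M1 `<=` M & M2 `<=` M] /\
  (forall y, M1 y -> lt y p) /\ (forall y, M2 y -> lt p y).

Let splits M (s : T * (set T * set T)) :=
  [/\ M s.1, N s.2.1, N s.2.2, s.2.1 `<=` M & s.2.2 `<=` M] /\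
  (forall y, s.2.1 y -> lt y s.1) /\ (forall y, s.2.2 y -> lt s.1 y).

Let split_choice M : exists s, N M -> splits M s.
Proof.
have [M' NM'] := N0; have [NM|nNM] := pselect (N M).
  by have [p [M1 [M2 sM]]] := N_split NM; exists (p, (M1, M2)).
by have [p [M1 [M2 _]]] := N_split NM'; exists (p, (M1, M2)) => /nNM.
Qed.

Let split M := sval (cid (split_choice M)).
Let child M (b : bool) := if b then (split M).2.2 else (split M).2.1.
Let region (s : seq bool) := foldl child (sval (cid N0)) s.
Let node s := (split (region s)).1.

Let splitP M : N M -> splits M (split M).
Proof. exact: (svalP (cid (split_choice M))). Qed.

Let child_N M b : N M -> N (child M b) /\ child M b `<=` M.
Proof. by move=> /splitP[[]]; case: b. Qed.

Let region_N s : N (region s).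
Proof.
rewrite /region; move: (sval _) (svalP (cid N0)).
by elim: s => //= b s IH M NM; apply/IH/(child_N b NM).1.
Qed.

Let region_cat s u : region (s ++ u) `<=` region s.
Proof.
rewrite /region foldl_cat -/(region s); move: (region s) (region_N s).
elim: u => [|b u IH] M NM //=.
by have [NC CM] := child_N b NM; apply: subset_trans (IH _ NC) CM.
Qed.

Let node_in s : region s (node s).
Proof. by have [[]] := splitP (region_N s). Qed.

Let node_child s b u : child (region s) b (node (s ++ b :: u)).
Proof.
have := @region_cat (rcons s b) u; rewrite cat_rcons {2}/region foldl_rcons.
by apply; apply: node_in.
Qed.

Let node_left s u : lt (node (s ++ false :: u)) (node s).
Proof. by have [_ [left _]] := splitP (region_N s); apply/left/(node_child s false u). Qed.

Let node_right s u : lt (node s) (node (s ++ true :: u)).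
Proof. by have [_ [_ right]] := splitP (region_N s); apply/right/(node_child s true u). Qed.

Lemma seq_prefix_trichotomy (A : Type) (s t : seq A) :
  (exists u, t = s ++ u) \/ (exists u, s = t ++ u) \/
  exists c a b u v, [/\ a <> b, s = c ++ a :: u & t = c ++ b :: v].
Proof.
elim: s t => [|a s IH] [|b t]; first by left; exists [::].
- by left; exists (b :: t).
- by right; left; exists (a :: s).
have [<-|ab] := pselect (a = b); last first.
  by right; right; exists [::], a, b, s, t.
case: (IH t) => [[u ->]|[[u ->]|[c [x [y [u [v [xy -> ->]]]]]]]].
- by left; exists u.
- by right; left; exists u.
- by right; right; exists (a :: c), x, y, u, v.
Qed.

(* Nodes are ordered like the dyadic rationals of their binary words. *)
Let node_dense s t : lt (node s) (node t) ->
  lt (node (rcons s true)) (node t) \/ lt (node s) (node (rcons t false)).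
Proof.
rewrite -!cats1 => st.
have asym x y : lt x y -> lt y x -> False by move=> xy yx; apply: (lt_irr (ltT xy yx)).
case: (seq_prefix_trichotomy s t) => [[[|[] u] Et]|[[[|[] u] Es]|[c [[] [[] [u [v []]]]]]]].
- by rewrite Et cats0 in st; case: (lt_irr st).
- by right; rewrite Et -catA; apply: node_right.
- by case: (asym _ _ st); rewrite Et; apply: node_left.
- by rewrite Es cats0 in st; case: (lt_irr st).
- by case: (asym _ _ st); rewrite Es; apply: node_right.
- by left; rewrite Es -catA; apply: node_left.
- by [].
- move=> _ Es Et; case: (asym _ _ st); rewrite Es Et.
  exact: ltT (node_left _ _) (node_right _ _).
- move=> _ Es Et; left; rewrite Es Et -catA /=.
  exact: ltT (node_left _ _) (node_right _ _).
- by [].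
Qed.

Theorem splitting_embeds_rat : embeds_rat lt (\bigcup_(M in N) M).
Proof.
apply: (embeds_ratS (P := range node)).
  by move=> _ [s _ <-]; exists (region s); [apply: region_N|apply: node_in].
apply: dense_embeds_rat => //.
- by exists (node [::]), [::].
- move=> _ [s _ <-]; exists (node (rcons s false)); first by exists (rcons s false).
  by rewrite -cats1; apply: node_left.
- move=> _ [s _ <-]; exists (node (rcons s true)); first by exists (rcons s true).
  by rewrite -cats1; apply: node_right.
- move=> _ _ [s _ <-] [t _ <-] st; case: (node_dense st) => [lt_st|lt_st].
    exists (node (rcons s true)); split=> //.
    by rewrite -cats1; apply: node_right.
  exists (node (rcons t false)); split=> //.
  by rewrite -cats1; apply: node_left.
Qed.
End SplittingTree.

Lemma proper_sub_trans (T : Type) (A B C : set T) : A `<` B -> B `<=` C -> A `<` C.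
Proof.
by move=> [AB BA] BC; split=> [|CA]; [apply: subset_trans BC|apply/BA/(subset_trans BC)].
Qed.

Definition cylinder (T : Type) (A B : set T) : set (set T) :=
  [set S | A `<=` S /\ B `&` S = set0].

Definition basic_cylinder (T : Type) (X A B : set T) :=
  [/\ finite_set A, finite_set B, A `<=` X & B `<=` X].

Definition perfect_in (T : Type) (X : set T) (G : set (set T)) :=
  G !=set0 /\ forall S A B, G S -> basic_cylinder X A B -> cylinder A B S ->
    exists S', [/\ G S', cylinder A B S' & S' <> S].

Lemma cylinderU (T : Type) (A B A' B' S : set T) :
  cylinder (A `|` A') (B `|` B') S <-> cylinder A B S /\ cylinder A' B' S.
Proof.
rewrite /cylinder /= !disjoints_subset; split.
  by move=> [AS BS]; do !split; move=> x hx; [apply: AS|apply: BS|apply: AS|apply: BS];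
    by [left|right].
by move=> [[AS BS] [AS' BS']]; split=> x [hx|hx];
  by [apply: AS|apply: AS'|apply: BS|apply: BS'].
Qed.

Lemma basic_cylinderU (T : Type) (X A B A' B' : set T) :
  basic_cylinder X A B -> basic_cylinder X A' B' -> basic_cylinder X (A `|` A') (B `|` B').
Proof.
move=> [fA fB AX BX] [fA' fB' AX' BX']; split; rewrite ?finite_setU //.
  by move=> x [/AX|/AX'].
by move=> x [/BX|/BX'].
Qed.

Lemma basic_cylinder1 (T : Type) (X : set T) x : X x -> basic_cylinder X [set x] set0.
Proof. by move=> Xx; split=> [||y ->//|y //]; [apply: finite_set1|apply: finite_set0]. Qed.

Lemma cylinder1 (T : Type) (x : T) S : cylinder [set x] set0 S <-> S x.
Proof. by split=> [[/(_ x erefl)]//|Sx]; split=> [y ->//|]; apply: set0I. Qed.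

Section PerfectDownsets.
Variables (T : Type) (lt : T -> T -> Prop) (Y : set T) (H : set (set T)).
Hypothesis ltT : forall x y z, lt x y -> lt y z -> lt x z.
Hypothesis lt_irr : forall x, ~ lt x x.
Hypothesis lt_total : forall x y, Y x -> Y y -> x <> y -> lt x y \/ lt y x.
Hypothesis H_sub : forall c, H c -> c `<=` Y.
Hypothesis H_down : forall c y z, H c -> c y -> Y z -> lt z y -> c z.
Hypothesis H_perfect : perfect_in Y H.

Lemma downset_lt c y z : H c -> c y -> Y z -> ~ c z -> lt y z.
Proof.
move=> Hc cy Yz ncz; have yz : y <> z by move=> yz; apply: ncz; rewrite -yz.
by case: (lt_total (H_sub Hc cy) Yz yz) => // /(H_down Hc cy Yz).
Qed.

Lemma downsets_proper c c' : H c -> H c' -> ~ c' `<=` c -> c `<` c'.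
Proof.
move=> Hc Hc' /nonsubset[z [c'z ncz]]; split=> // [y cy|/(_ z c'z)//].
exact: H_down Hc' c'z (H_sub Hc cy) (downset_lt Hc cy (H_sub Hc' c'z) ncz).
Qed.

Lemma downsets_total c c' : H c -> H c' -> c <> c' -> c `<` c' \/ c' `<` c.
Proof.
move=> Hc Hc' cc'; have [c'c|nc'c] := pselect (c' `<=` c); last first.
  by left; apply: downsets_proper.
right; apply: downsets_proper => // cc'2; apply: cc'.
by rewrite eqEsubset.
Qed.

Definition has_between u v := [/\ H u, H v & exists w, [/\ H w, u `<` w & w `<` v]].

Lemma has_between_two u v : has_between u v ->
  exists x y, [/\ H x, H y, u `<` x, x `<` y & y `<` v].
Proof.
move=> [Hu Hv [w [Hw uw wv]]].
have [[a [wa nua]] [b [vb nwb]]] := (nonsubset uw.2, nonsubset wv.2).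
have [||w' [Hw' [aw' bw'] w'w]] := H_perfect.2 w [set a] [set b] Hw.
- split; [exact: finite_set1|exact: finite_set1|move=> x ->|move=> x ->].
    exact: (H_sub Hw wa).
  exact: (H_sub Hv vb).
- by split=> [x ->//|]; apply/disjoints_subset => x -> /nwb.
have uw' : u `<` w' by apply: downsets_proper => // /(_ a (aw' a erefl)).
have w'v : w' `<` v.
  apply: downsets_proper => // /(_ b vb) w'b.
  by move/disjoints_subset: bw' => /(_ b erefl).
case: (downsets_total Hw Hw' (nesym w'w)) => [ww'|w'w2].
  by exists w, w'.
by exists w', w.
Qed.

Lemma has_between_exists : exists u v, has_between u v.
Proof.
have [[c Hc] perf] := H_perfect.
have [||c' [Hc' _ c'c]] := perf c set0 set0 Hc.
- by split; rewrite ?finite_set0.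
- by split=> //; apply: set0I.
have [c1 [c2 [H1 H2 c12]]] : exists c1 c2, [/\ H c1, H c2 & c1 `<` c2].
  by case: (downsets_total Hc Hc' (nesym c'c)); [exists c, c'|exists c', c].
have [a [c2a nc1a]] := nonsubset c12.2.
have [||c3 [H3 /cylinder1 c3a c3c2]] := perf c2 [set a] set0 H2.
- by apply: basic_cylinder1; apply: (H_sub H2 c2a).
- exact/cylinder1.
have c13 : c1 `<` c3 by apply: downsets_proper => // /(_ a c3a).
case: (downsets_total H2 H3 (nesym c3c2)) => [c23|c32].
  by exists c1, c3; split=> //; exists c2.
by exists c1, c2; split=> //; exists c3.
Qed.

Theorem perfect_downsets_embeds_rat : embeds_rat lt Y.
Proof.
pose N := [set M | exists u v, has_between u v /\ M = v `\` u].
apply: (embeds_ratS (P := \bigcup_(M in N) M)).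
  by move=> y [_ [u [v [[_ Hv _] ->]]] [vy _]]; apply: (H_sub Hv vy).
apply: splitting_embeds_rat => //.
  by have [u [v uv]] := has_between_exists; exists (v `\` u), u, v.
move=> _ [u [v [uv ->]]]; have [Hu Hv _] := uv.
have [x [y [Hx Hy ux xy yv]]] := has_between_two uv.
have [a [b [Ha Hb ua ab b_y]]] :=
  has_between_two (And3 Hu Hy (ex_intro _ x (And3 Hx ux xy))).
have [c [d [Hc Hd bc cd dv]]] :=
  has_between_two (And3 Hb Hv (ex_intro _ y (And3 Hy b_y yv))).
have [p [cp nbp]] := nonsubset bc.2.
have ub : u `<=` b := properW (proper_sub_trans ua (properW ab)).
have uc : u `<=` c := subset_trans ub (properW bc).
have cv : c `<=` v := properW (proper_sub_trans cd (properW dv)).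
have bv : b `<=` v := subset_trans (properW bc) cv.
exists p, (b `\` u), (v `\` c); split; first split.
- by split; [apply: cv|move/ub].
- by exists u, b; split=> //; split=> //; exists a.
- by exists c, v; split=> //; split=> //; exists d.
- by move=> z [bz nuz]; split=> //; apply: bv.
- by move=> z [vz ncz]; split=> // /uc.
split=> z [hz nz]; first exact: downset_lt Hb hz (H_sub Hc cp) nbp.
exact: downset_lt Hc cp (H_sub Hv hz) nz.
Qed.
End PerfectDownsets.

Lemma rat_interval_embeds (x y : rat) : x < y -> embeds_rat <%R [set z | x < z /\ z < y].
Proof.
move=> xy; apply: dense_embeds_rat.
- by move=> u v w; apply: lt_trans.
- by exists ((x + y) / 2); split; lra.
- by move=> z [xz zy]; exists ((x + z) / 2); [split|]; lra.
- by move=> z [xz zy]; exists ((z + y) / 2); [split|]; lra.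
- by move=> u v [xu uy] [xv vy] uv; exists ((u + v) / 2); split; [split|..]; lra.
Qed.

Lemma rat_separated_intervals : exists A B : rat -> rat,
  (forall q, 0 < A q /\ A q < B q) /\ (forall q r, q < r -> B q < A r).
Proof.
pose lt2 (i j : rat * rat) := i.2 < j.1 /\ j.1 < j.2.
have [||||| f [Df mf]] := @dense_embeds_rat _ lt2 [set i | 0 < i.1 /\ i.1 < i.2].
- by move=> [x1 x2] [y1 y2] [z1 z2] [/= h1 h2] [/= h3 h4]; split=> /=; lra.
- by exists (1, 2); split=> /=; lra.
- by move=> [x1 x2] [/= h1 h2]; exists (x1 / 3, x1 / 2); split=> /=; lra.
- by move=> [x1 x2] [/= h1 h2]; exists (x2 + 1, x2 + 2); split=> /=; lra.
- move=> [x1 x2] [y1 y2] [/= h1 h2] [/= h3 h4] [/= h5 h6].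
  exists (x2 + (y1 - x2) / 3, x2 + 2 * (y1 - x2) / 3).
  by split; split=> /=; lra.
by exists (fun q => (f q).1), (fun q => (f q).2); split=> [//|q r /mf[]].
Qed.

Lemma embeds_rat_or_setC (A : set rat) : embeds_rat <%R A \/ embeds_rat <%R (~` A).
Proof.
have [dense|] := pselect (forall x y : rat, x < y -> exists2 z, A z & x < z /\ z < y).
  left; apply: dense_embeds_rat.
  - by move=> u v w; apply: lt_trans.
  - by have [z Az _] := dense 0 1 ltr01; exists z.
  - move=> z _; have [|w Aw []] := dense (z - 1) z; first lra.
    by exists w.
  - move=> z _; have [|w Aw []] := dense z (z + 1); first lra.
    by exists w.
  - by move=> u v _ _ /dense[w Aw []]; exists w.
move=> /existsNP[x /existsNP[y /not_implyP[xy /forall2NP nA]]].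
right; apply: embeds_ratS (rat_interval_embeds xy) => z xzy Az.
by case: (nA z) => [/(_ Az)|].
Qed.

Definition order_convex (R : realDomainType) (Y K : set R) :=
  forall s t u, K s -> K t -> Y u -> s <= u -> u <= t -> K u.

Lemma order_convex_lt (R : realDomainType) (Y K : set R) t0 x y :
  order_convex Y K -> K t0 -> K x -> Y y -> ~ K y -> t0 <= x -> t0 <= y -> x < y.
Proof.
move=> cK Kt0 Kx Yy nKy t0x t0y; rewrite ltNge; apply/negP => yx.
exact: nKy (cK _ _ _ Kt0 Kx Yy t0y yx).
Qed.

Lemma order_convex_gt (R : realDomainType) (Y K : set R) t0 x y :
  order_convex Y K -> K t0 -> K x -> Y y -> ~ K y -> x <= t0 -> y <= t0 -> y < x.
Proof.
move=> cK Kt0 Kx Yy nKy xt0 yt0; rewrite ltNge; apply/negP => xy.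
exact: nKy (cK _ _ _ Kx Kt0 Yy xy yt0).
Qed.

Lemma conv_sub (R : realType) (V : lmodType R) (F : set V) : F `<=` conv F.
Proof. by move=> x Fx C _; apply. Qed.

Lemma conv_min (R : realType) (V : lmodType R) (F C : set V) :
  convex_in C -> F `<=` C -> conv F `<=` C.
Proof. by move=> cC FC x; apply. Qed.

Lemma conv_convex (R : realType) (V : lmodType R) (F : set V) : convex_in (conv F).
Proof. by move=> x y Fx Fy t t0 t1 C cC FC; apply: cC (Fx C cC FC) (Fy C cC FC) t t0 t1. Qed.

Lemma Co_compact_Co (R : realType) (V : lmodType R) (X : set V) :
  Co_compact X `<=` Co X.
Proof. by move=> _ [F [_ [_ ->]]]; exists (conv F); split=> //; apply: conv_convex. Qed.

Lemma Co_sub (R : realType) (V : lmodType R) (X S : set V) : Co X S -> S `<=` X.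
Proof. by move=> [C [_ ->]] x []. Qed.

Section Line.
Variables (R : realType) (V : lmodType R) (a d : V).

Definition line_point (t : R) : V := a + t *: d.

Lemma line_point_inj : d != 0 -> injective line_point.
Proof.
move=> d0 s t /addrI /eqP; rewrite -subr_eq0 -scalerBl scaler_eq0 (negbTE d0) orbF.
by rewrite subr_eq0 => /eqP.
Qed.

Lemma line_point_comb l s t :
  l *: line_point s + (1 - l) *: line_point t = line_point (l * s + (1 - l) * t).
Proof.
rewrite /line_point !scalerDr !scalerA addrACA -scalerDl [l + _]addrC subrK scale1r.
by rewrite scalerDl.
Qed.

Lemma convex_line_between C s t u : convex_in C ->
  C (line_point s) -> C (line_point t) -> s <= u -> u <= t -> C (line_point u).
Proof.
move=> cC Cs Ct su ut; have [st|st] := eqVneq s t.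
  by move: ut; rewrite -st => us; have /eqP-> : u == s by rewrite eq_le us su.
have [l l01 ->] : exists2 l, 0 <= l <= 1 & u = l * s + (1 - l) * t.
  have ts : t - s != 0 by rewrite subr_eq0 eq_sym.
  have lst : s < t by rewrite lt_neqAle st (le_trans su ut).
  exists ((t - u) / (t - s)); last by field.
  by apply/andP; split; [apply: divr_ge0|rewrite ler_pdivrMr]; lra.
by case/andP: l01 => l0 l1; rewrite -line_point_comb; apply: cC.
Qed.

Definition line_segment s t : set V :=
  [set x | exists2 u, s <= u <= t & x = line_point u].

Lemma line_segment_convex s t : convex_in (line_segment s t).
Proof.
move=> _ _ [u1 /andP[h1 h2] ->] [u2 /andP[h3 h4] ->] l l0 l1.
by rewrite line_point_comb; exists (l * u1 + (1 - l) * u2) => //; apply/andP; split; nra.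
Qed.

Lemma downset_line_convex (D : set R) :
  (forall s t, D t -> s <= t -> D s) -> convex_in (line_point @` D).
Proof.
move=> Ddown _ _ [s Ds <-] [t Dt <-] l l0 l1; rewrite line_point_comb.
exists (l * s + (1 - l) * t) => //.
by have [st|ts] := leP s t; [apply: Ddown Dt _|apply: Ddown Ds _]; nra.
Qed.

Variable X : set V.
Hypothesis X_line : X `<=` range line_point.

Definition line_trace (S : set V) : set R := [set t | S (line_point t)].

Lemma X_line_trace x : X x -> exists2 t, line_trace X t & x = line_point t.
Proof. by move=> Xx; have [t _ xt] := X_line Xx; exists t; rewrite /line_trace /= xt. Qed.

Lemma Co_order_convex S : Co X S -> order_convex (line_trace X) (line_trace S).
Proof.
move=> [C [cC ->]] s t u [Cs _] [Ct _] Xu su ut; split=> //.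
exact: convex_line_between cC Cs Ct su ut.
Qed.

End Line.

Lemma proper_subsetE (T : Type) (A B : set T) : proper_subset A B <-> A `<` B.
Proof.
split=> [[AB nAB]|[AB nBA]]; split=> //.
  by move=> BA; apply: nAB; rewrite eqEsubset.
by move=> AeB; apply: nBA; rewrite AeB.
Qed.


Lemma finite_sub_increasing (T : eqType) (S : rat -> set T) q A :
  (forall r r', r <= r' -> S r `<=` S r') ->
  (forall x, S q x -> exists2 r, r < q & S r x) ->
  finite_set A -> A `<=` S q -> exists2 r, r < q & A `<=` S r.
Proof.
move=> mono left /finite_seqP[s ->]; elim: s => [|x s IH] sub.
  by exists (q - 1) => [|y]; rewrite ?inE //; lra.
have [r1 r1q sr1] : exists2 r, r < q & [set` s] `<=` S r.
  by apply: IH => y ys; apply: sub; rewrite /= inE ys orbT.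
have [r2 r2q xr2] := left x (sub x (mem_head x s)).
exists (Order.max r1 r2); first by rewrite gt_max r1q r2q.
move=> y; rewrite /= inE => /orP[/eqP->|ys].
  by apply: mono xr2; rewrite le_max lexx orbT.
by apply: mono (sr1 _ ys); rewrite le_max lexx.
Qed.

Lemma not_top_scattered_perfect (R : realType) (V : lmodType R) (X : set V) (F : set (set V)) :
  ~ top_scattered X F -> exists2 G, G `<=` F & perfect_in X G.
Proof.
move=> ntop; apply: contra_notP ntop => noperf G GF G0.
apply: contra_notP noperf => niso; exists G => //; split=> // S A B GS [fA fB AX BX] [AS BS].
apply: contra_notP niso => nT; exists S; split=> //; exists A, B.
split=> //; split=> // T GT AT BT.
by apply: contra_notP nT => TS; exists T.
Qed.

Lemma perfect_in_member (T : Type) (X : set T) (G : set (set T)) :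
  perfect_in X G -> exists S x, G S /\ S x.
Proof.
move=> [[S0 GS0] G_perfect]; have [[x S0x]|S00] := pselect (S0 !=set0).
  by exists S0, x.
have [||S1 [GS1 _ S10]] := G_perfect S0 set0 set0 GS0.
- by split; rewrite ?finite_set0.
- by split=> //; apply: set0I.
have [x S1x] : S1 !=set0.
  apply: contrapT => S1n; apply: S10.
  by rewrite eqEsubset; split=> x hx; [case: S1n|case: S00]; exists x.
by exists S1, x.
Qed.

Section Directions.
Variables (R : realType) (V : lmodType R) (a d : V) (X : set V).
Hypothesis d0 : d != 0.
Hypothesis X_line : X `<=` range (line_point a d).
Local Notation p := (line_point a d).
Local Notation Y := (line_trace a d X).

Lemma embeds_rat_Co_compact :
  embeds_rat <%R Y -> embeds_rat (@proper_subset V) (Co_compact X).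
Proof.
move=> [f [Yf mf]]; have [e [e01 me]] := rat_interval_embeds ltr01.
pose b := f 0; pose g q := f (e q).
have bg q : b < g q by apply/mf; case: (e01 q).
pose K q := conv [set p b; p (g q)] `&` X.
exists K; split=> [q|q r qr].
  exists [set p b; p (g q)]; split; last by split=> //; apply: finite_set2.
  by move=> _ [->|->]; apply: Yf.
have gqr : g q < g r by apply/mf/me.
apply/proper_subsetE; split=> [x [Kx Xx]|Krq].
  split=> //; apply: conv_min Kx; first exact: conv_convex.
  move=> _ [->|->]; first by apply: conv_sub; left.
  apply: (convex_line_between (s := b) (t := g r)) (ltW (bg q)) (ltW gqr).
  - exact: conv_convex.
  - by apply: conv_sub; left.
  - by apply: conv_sub; right.
have segment_K : conv [set p b; p (g q)] `<=` line_segment a d b (g q).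
  apply: conv_min; first exact: line_segment_convex.
  by move=> _ [->|->]; [exists b|exists (g q)]; rewrite ?lexx ?(ltW (bg q)).
have Kr_gr : K r (p (g r)) by split; [apply: conv_sub; right|apply: Yf].
have [u /andP[_ ugq] /(line_point_inj d0) gru] : line_segment a d b (g q) (p (g r)).
  by apply: segment_K; case: (Krq _ Kr_gr).
by move: gqr; rewrite gru ltNge ugq.
Qed.

Lemma Co_chain_embeds_rat :
  embeds_rat (@proper_subset V) (Co X) -> embeds_rat <%R Y.
Proof.
move=> [f [Cf mf]]; pose P q := line_trace a d (f q).
have PY q : P q `<=` Y by move=> t; apply: (Co_sub (Cf q)).
have P_mono q r : q <= r -> P q `<=` P r.
  by rewrite le_eqVlt => /orP[/eqP->//|/mf/proper_subsetE/properW fqr t]; apply: fqr.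
have P_new q r : q < r -> exists2 t, P r t & ~ P q t.
  move=> /mf/proper_subsetE[_ /nonsubset[x [frx nfqx]]].
  have [t _ xt] := X_line_trace X_line (Co_sub (Cf r) frx).
  by exists t; rewrite /P /line_trace /= -xt.
have [t0 Pt0 _] := P_new (-1) 0 (ltrN10 _).
(* For q < r, w q lies in P (A r) but w r does not. *)
have [A [B [AB BA]]] := rat_separated_intervals.
have [w Bw Aw] : exists2 w : rat -> R, forall q, P (B q) (w q) & forall q, ~ P (A q) (w q).
  have wq q : exists t, P (B q) t /\ ~ P (A q) t.
    by have [|t] := P_new (A q) (B q); [case: (AB q)|exists t].
  by exists (fun q => sval (cid (wq q))) => q; have [] := svalP (cid (wq q)).
have t0A q : P (A q) t0 by apply: P_mono Pt0; apply: ltW; case: (AB q).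
have wA q r : q < r -> P (A r) (w q).
  by move=> qr; apply: P_mono (Bw q); apply/ltW/BA.
have convexA q := Co_order_convex (a := a) (d := d) (Cf (A q)).
have [[h [h_right mh]]|[h [h_left mh]]] := embeds_rat_or_setC [set q | t0 < w q].
  exists (w \o h); split=> [q|q r qr]; first exact: PY (Bw (h q)).
  have hqr := mh _ _ qr.
  exact: order_convex_lt (convexA _) (t0A _) (wA _ _ hqr) (PY _ _ (Bw _)) (Aw _)
    (ltW (h_right q)) (ltW (h_right r)).
apply: embeds_rat_flip; exists (w \o h); split=> [q|q r qr]; first exact: PY (Bw (h q)).
have w_left q' : w (h q') <= t0 by rewrite leNgt; apply/negP/h_left.
exact: order_convex_gt (convexA _) (t0A _) (wA _ _ (mh _ _ qr)) (PY _ _ (Bw _)) (Aw _)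
  (w_left q) (w_left r).
Qed.

Lemma embeds_rat_not_top_scattered : embeds_rat <%R Y -> ~ top_scattered X (Co X).
Proof.
move=> [f [Yf mf]] top.
pose D q := [set t | exists2 s, s < q & t <= f s].
pose S q := p @` D q `&` X.
have S_mono r r' : r <= r' -> S r `<=` S r'.
  move=> rr' _ [[t [s sr ts] <-] Xt]; split=> //; exists t => //.
  by exists s => //; apply: lt_le_trans rr'.
have S_left q x : S q x -> exists2 r, r < q & S r x.
  move=> [[t [s sq ts] xt] Xx]; exists ((s + q) / 2); first lra.
  by split=> //; exists t => //; exists s => //; lra.
have S_Co q : Co X (S q).
  exists (p @` D q); split=> //; apply: downset_line_convex => s t [u tu ut] st.
  by exists u => //; apply: le_trans ut.
have [||_ [[q _ <-] [A [B [fA fB AX BX [AS BS iso]]]]]] := top (range S).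
- by move=> _ [q _ <-]; apply: S_Co.
- by exists (S 0), 0.
have [r rq Ar] := finite_sub_increasing S_mono (S_left q) fA AS.
have BSr : B `&` S r = set0.
  apply/disjoints_subset => x Bx Srx; move/disjoints_subset: BS; apply; first exact: Bx.
  exact: S_mono (ltW rq) _ Srx.
pose m := (r + q) / 2.
have : S q (p (f m)) by split; [exists (f m) => //; exists m; rewrite /m; lra|apply: Yf].
rewrite -(iso (S r) (ex_intro2 _ _ r I erefl) Ar BSr).
move=> [[t [s sr ts] /(line_point_inj d0) tfm] _].
have : f s < f m by apply: mf; rewrite /m; lra.
by rewrite -tfm ltNge ts.
Qed.

Section Cuts.
Variables (G : set (set V)) (t0 : R).
Hypothesis G_Co : G `<=` Co X.

Definition side (b : bool) t := if b then t < t0 else t0 < t.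

Definition cut b (T : set V) := [set t | [/\ Y t, side b t & ~ T (p t)]].

Definition ltb (b : bool) (x y : R) := if b then x < y else y < x.

Lemma ltb_trans b x y z : ltb b x y -> ltb b y z -> ltb b x z.
Proof. by case: b => /= xy yz; [apply: lt_trans xy yz|apply: lt_trans yz xy]. Qed.

Lemma ltb_irr b x : ~ ltb b x x.
Proof. by case: b; rewrite /= ltxx. Qed.

Lemma ltb_total b x y : x <> y -> ltb b x y \/ ltb b y x.
Proof. by move/eqP; rewrite neq_lt; case: b => /=; case/orP => h; [left|right|right|left]. Qed.

Lemma cut_down b T y z : Co X T -> T (p t0) ->
  cut b T y -> Y z -> ltb b z y -> cut b T z.
Proof.
move=> CT Tt0 [Yy sy nTy] Yz zy; split=> //.
  by case: b sy zy => /= sy zy; [apply: lt_trans zy sy|apply: lt_trans sy zy].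
move=> Tz; apply: nTy; have cT := Co_order_convex (a := a) (d := d) CT.
by case: b sy zy => /= sy zy; [apply: cT Tz Tt0 Yy _ _|apply: cT Tt0 Tz Yy _ _];
  apply: ltW.
Qed.

Lemma cut_sub (T T' : set V) : Co X T -> T' (p t0) ->
  cut true T' `<=` cut true T -> cut false T' `<=` cut false T -> T `<=` T'.
Proof.
move=> CT T't0 sub_true sub_false x Tx.
have [t Yt xt] := X_line_trace X_line (Co_sub CT Tx); rewrite xt in Tx *.
apply: contrapT => nT't; have [tt0|t0t|tt0] := ltgtP t t0; last by rewrite tt0 in nT't.
- by have [_ _ /(_ Tx)] := sub_true t (And3 Yt tt0 nT't).
- by have [_ _ /(_ Tx)] := sub_false t (And3 Yt t0t nT't).
Qed.

Lemma cut_inj (T T' : set V) : Co X T -> Co X T' -> T (p t0) -> T' (p t0) ->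
  cut true T = cut true T' -> cut false T = cut false T' -> T = T'.
Proof.
move=> CT CT' Tt0 T't0 Etrue Efalse; rewrite eqEsubset; split.
  by apply: cut_sub; rewrite // ?Etrue ?Efalse.
by apply: cut_sub; rewrite // ?Etrue ?Efalse.
Qed.

Lemma cut_cylinder b T A' B' : basic_cylinder Y A' B' -> cylinder A' B' (cut b T) ->
  [/\ basic_cylinder X (p @` (B' `&` side b)) (p @` A'),
      cylinder (p @` (B' `&` side b)) (p @` A') T &
      forall T', cylinder (p @` (B' `&` side b)) (p @` A') T' -> cylinder A' B' (cut b T')].
Proof.
move=> [fA' fB' A'Y B'Y] [A'c /disjoints_subset B'c]; split.
- split; [exact/finite_image/finite_setIl|exact: finite_image|..].
    by move=> _ [t [/B'Y Yt _] <-].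
  by move=> _ [t /A'c[Yt _ _] <-].
- split=> [_ [t [B't st] <-]|].
    by apply: contrapT => nTt; apply: (B'c t B't); split=> //; apply: B'Y.
  by apply/disjoints_subset => _ [t /A'c[_ _ nTt] <-].
move=> T' [BT' /disjoints_subset AT']; split=> [t A't|].
  have [Yt st _] := A'c t A't; split=> // T't.
  by apply: (AT' (p t)) => //; exists t.
by apply/disjoints_subset => t B't [_ st]; apply; apply: BT'; exists t.
Qed.

Lemma cuts_perfect_embeds_rat b A0 B0 :
  basic_cylinder X A0 B0 -> A0 (p t0) -> (exists S, G S /\ cylinder A0 B0 S) ->
  (forall T A B, G T -> cylinder A0 B0 T -> basic_cylinder X A B -> cylinder A B T ->
    exists T', [/\ G T', cylinder (A0 `|` A) (B0 `|` B) T' & cut b T' <> cut b T]) ->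
  embeds_rat (ltb b) Y.
Proof.
move=> basic0 A0t0 [S [GS S0]] cut_moves.
have anchored T : cylinder A0 B0 T -> T (p t0) by move=> [A0T _]; apply: A0T.
apply: (@perfect_downsets_embeds_rat _ _ _ (cut b @` (G `&` cylinder A0 B0))).
- exact: ltb_trans.
- exact: ltb_irr.
- by move=> x y _ _; apply: ltb_total.
- by move=> _ [T _ <-] t [].
- by move=> _ y z [T [GT /anchored Tt0] <-]; apply: (cut_down (G_Co GT) Tt0).
split=> [|_ A' B' [T [GT T0] <-] basic' cyl'].
  by exists (cut b S), S.
have [basic cyl cyl_cut] := cut_cylinder basic' cyl'.
have [T' [GT' /cylinderU[T'0 T'AB] moved]] := cut_moves T _ _ GT T0 basic cyl.
by exists (cut b T'); split=> //; [exists T'|apply: cyl_cut].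
Qed.
End Cuts.

Lemma perfect_Co_embeds_rat (G : set (set V)) :
  G `<=` Co X -> perfect_in X G -> embeds_rat <%R Y.
Proof.
move=> G_Co Gperf; have [S1 [x0 [GS1 S1x0]]] := perfect_in_member Gperf.
have G_perfect := Gperf.2.
have [t0 Yt0 x0t0] := X_line_trace X_line (Co_sub (G_Co _ GS1) S1x0).
(* Either the cut below t0 is constant on some open piece, and then the cut
   above t0 moves everywhere on it, or the cut below t0 moves everywhere. *)
have [[S [A [B [GS basicAB At0 SAB cut_const]]]]|cut_moves] := pselect (exists S A B,
    [/\ G S, basic_cylinder X A B, A (p t0), cylinder A B S &
     forall T, G T -> cylinder A B T -> cut t0 true T = cut t0 true S]).
  apply: embeds_rat_flip; apply: (cuts_perfect_embeds_rat G_Co (b := false) basicAB At0).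
    by exists S.
  move=> T A' B' GT TAB basic' TA'B'.
  have [||T' [GT' cylT' T'T]] := G_perfect T (A `|` A') (B `|` B') GT.
  - exact: basic_cylinderU.
  - exact/cylinderU.
  exists T'; split=> // cutsE; apply: T'T.
  apply: (cut_inj (t0 := t0) (G_Co _ GT') (G_Co _ GT)).
  - by have [AT' _] := cylT'; apply: AT'; left.
  - by have [AT _] := TAB; apply: AT.
  - by rewrite (cut_const T') ?(cut_const T) //; case/cylinderU: cylT'.
  - exact: cutsE.
apply: (cuts_perfect_embeds_rat G_Co (b := true) (@basic_cylinder1 _ X (p t0) Yt0)).
- by [].
- by exists S1; split; [|apply/cylinder1; rewrite -x0t0].
move=> T A' B' GT T0 basic' TA'B'; apply: contrapT => no_move.
apply: cut_moves; exists T, ([set p t0] `|` A'), (set0 `|` B'); split=> //.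
- exact: basic_cylinderU (@basic_cylinder1 _ X (p t0) Yt0) basic'.
- by left.
- exact/cylinderU.
move=> T' GT' T'0; apply: contrapT => cutsN; apply: no_move.
by exists T'; split.
Qed.
End Directions.

Theorem proposition5p5 (R : realType) (V : lmodType R) (a d : V) (X : set V) :
  d != 0 ->
  X `<=` [set a + t *: d | t in [set: R]] ->
  let iv := order_scattered (fun s t : R => s < t) [set t : R | X (a + t *: d)] in
  [/\ top_scattered X (Co X) <-> iv,
      order_scattered (@proper_subset V) (Co X) <-> iv &
      order_scattered (@proper_subset V) (Co_compact X) <-> iv].
Proof.
move=> d0 X_line iv; rewrite {}/iv.
have Co_compact_chain := embeds_rat_Co_compact d0 (X := X).
have Co_chain := Co_chain_embeds_rat X_line.
have Co_compact_Co_chain : embeds_rat (@proper_subset V) (Co_compact X) ->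
    embeds_rat (@proper_subset V) (Co X) := embeds_ratS (@Co_compact_Co _ _ X).
split; split.
- by move=> top /(embeds_rat_not_top_scattered d0).
- move=> Y_scattered; apply: contrapT => /not_top_scattered_perfect[G GCo Gperf].
  exact/Y_scattered/(perfect_Co_embeds_rat X_line GCo Gperf).
- by move=> Co_scattered /Co_compact_chain/Co_compact_Co_chain.
- by move=> Y_scattered /Co_chain.
- by move=> Co_scattered /Co_compact_chain.
- by move=> Y_scattered /Co_compact_Co_chain/Co_chain.
Qed.
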